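(* Let $\mathcal{X}=\langle P,K,V\rangle$ be a polyhedral model. For every cell $\tilde\sigma$ of $K$ and all $x,y\in\tilde\sigma$, $x\equiv y$, i.e. for every SLCS formula $\phi$, $\mathcal{X},x\models\phi\iff\mathcal{X},y\models\phi$. Consequently, for every formula $\phi$, $[\![\phi]\!]$ is a finite union of cells of $K$.
   Context: A $d$-simplex $\sigma\subseteq\mathbb{R}^m$ is the convex hull of $d+1$ affinely independent points $v_0,\dots,v_d$ (its vertices); the simplexes spanned by subsets of the vertices (including the empty simplex) are its faces, and $\tau\preceq\sigma$ means $\tau$ is a face of $\sigma$. The relative interior of $\sigma$ is $\tilde\sigma=\{\sum_i\lambda_iv_i:\lambda_i\in(0,1],\sum_i\lambda_i=1\}$. A simplicial complex $K$ is a finite set of simplexes of $\mathbb{R}^m$ closed under taking faces and such that the intersection of any two of its simplexes is a face of both. Its polyhedron is $|K|=\bigcup K$, with the subspace topology of $\mathbb{R}^m$; $\mathcal{C}$ and $\mathcal{I}$ denote closure and interior in this space. The cells of $K$ are the sets $\tilde\sigma$ for nonempty $\sigma\in K$; they form a partition $\tilde K$ of $|K|$. A path in a space $P$ is a continuous $\pi:[0,1]\to P$; $\pi(S)=\{\pi(s):s\in S\}$. Fix a finite set $AP$ of atomic propositions. A polyhedral model is $\mathcal{X}=\langle P,K,V\rangle$ with $K$ a simplicial complex, $P=|K|$, and $V:AP\to\mathcal{P}(P)$ such that each $V(p)$ is a union of cells of $K$ ($K$ is then called coherent with the model). SLCS formulas: $\phi::=\top\mid p\mid\neg\phi\mid\phi\wedge\phi\mid\Box\phi\mid\gamma(\phi,\phi)$,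 $p\in AP$. Semantics at $x\in P$, with $[\![\phi]\!]=\{x\in P:\mathcal{X},x\models\phi\}$: $\top$ always holds; $x\models p$ iff $x\in V(p)$; Boolean connectives as usual; $x\models\Box\phi$ iff $x\in\mathcal{I}([\![\phi]\!])$; $x\models\gamma(\phi,\psi)$ iff there is a path $\pi$ in $P$ with $\pi(0)=x$, $\pi((0,1))\subseteq[\![\phi]\!]$ and $\pi(1)\in[\![\psi]\!]$. Logical equivalence $\equiv$ on $P$: $x\equiv y$ iff $x$ and $y$ satisfy exactly the same SLCS formulas. *)

From HB Require Import structures.
From mathcomp Require Import all_boot all_order all_algebra.
From mathcomp Require Import all_classical all_reals all_analysis.
Set Implicit Arguments. Unset Strict Implicit. Unset Printing Implicit Defensive.
Import Order.TTheory GRing.Theory Num.Theory.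
Import numFieldNormedType.Exports.
Local Open Scope classical_set_scope.
Local Open Scope ring_scope.

Section Polyhedra.
Variables (R : realType) (m : nat).
Local Notation pt := 'rV[R]_m.

Definition conv (vs : seq pt) : set pt :=
  [set x | exists l : 'I_(size vs) -> R,
      (forall i, 0 <= l i) /\ \sum_(i < size vs) l i = 1 /\
      x = \sum_(i < size vs) l i *: vs`_i].

Definition open_conv (vs : seq pt) : set pt :=
  [set x | exists l : 'I_(size vs) -> R,
      (forall i, 0 < l i <= 1) /\ \sum_(i < size vs) l i = 1 /\
      x = \sum_(i < size vs) l i *: vs`_i].

Definition aff_indep (vs : seq pt) : Prop :=
  forall l : 'I_(size vs) -> R,
    \sum_(i < size vs) l i = 0 -> \sum_(i < size vs) l i *: vs`_i = 0 ->
    forall i, l i = 0.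

(** sigma is a simplex (possibly empty) *)
Definition simplex (s : set pt) : Prop :=
  exists vs, aff_indep vs /\ s = conv vs.

Definition face (t s : set pt) : Prop :=
  exists vs ws : seq pt, [/\ aff_indep vs, s = conv vs,
     {subset ws <= vs} & t = conv ws].

Definition relint (s : set pt) : set pt :=
  [set x | exists vs, [/\ aff_indep vs, s = conv vs & open_conv vs x]].

Definition simplicial_complex (K : set (set pt)) : Prop :=
  [/\ finite_set K,
      (forall s, K s -> simplex s),
      (forall s t, K s -> face t s -> K t) &
      (forall s t, K s -> K t -> face (s `&` t) s /\ face (s `&` t) t)].

Definition polyhedron (K : set (set pt)) : set pt :=
  \bigcup_(s in K) s.

Definition is_cell (K : set (set pt)) (C : set pt) : Prop :=
  exists s, [/\ K s, s !=set0 & C = relint s].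

Definition union_of_cells (K : set (set pt)) (A : set pt) : Prop :=
  exists F : set (set pt), (forall C, F C -> is_cell K C) /\ A = \bigcup_(C in F) C.

Definition polyhedral_model (AP : finType) (K : set (set pt)) (V : AP -> set pt) :=
  simplicial_complex K /\ forall p, union_of_cells K (V p).

End Polyhedra.

Inductive slcs (AP : Type) : Type :=
| FTop
| FAtom of AP
| FNeg of slcs AP
| FAnd of slcs AP & slcs AP
| FBox of slcs AP
| FGamma of slcs AP & slcs AP.
Arguments FTop {AP}.

Section Semantics.
Variables (R : realType) (m : nat) (AP : finType).
Local Notation pt := 'rV[R]_m.
Variables (K : set (set pt)) (V : AP -> set pt).
Local Notation P := (polyhedron K).

Definition sub_interior (S : set pt) : set pt :=
  [set x | P x /\ exists U : set pt, [/\ open U, U x & U `&` P `<=` S]].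

Definition path_in (pi : R -> pt) : Prop :=
  {within `[0, 1], continuous pi} /\ (forall s, s \in `[0, 1] -> P (pi s)).

Fixpoint sat (phi : slcs AP) : set pt :=
  match phi with
  | FTop => P
  | FAtom p => V p
  | FNeg f => P `\` sat f
  | FAnd f g => sat f `&` sat g
  | FBox f => sub_interior (sat f)
  | FGamma f g => [set x | P x /\ exists pi : R -> pt,
        [/\ path_in pi, pi 0 = x,
            (forall s, s \in `]0, 1[ -> sat f (pi s)) & sat g (pi 1)]]
  end.

End Semantics.

(** Call a set [S] of points cell-invariant if, for every simplex [t] of the
    complex [K], [S] contains either all or none of the relative interior of
    [t].  By induction on [phi], every [[phi]] is a cell-invariant subset of
    [|K|]; since the finitely many cells partition [|K|], a cell-invariant
    subset of [|K|] is the union of the cells it contains.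

    In a
    simplicial complex this yields that a simplex whose relative interior meets
    another simplex is contained in it; hence each point of [|K|] has a unique
    carrier, and the open star of [x] is an open neighbourhood of [x] whose
    points have carriers containing [x].  The modal cases then follow: for
    [Box], the points of the open star of [y] are joined by segments to points
    near [x]; for [gamma], a path from [x] is rerouted through a segment from
    [y] inside the carrier of a point where the path crosses the open star. *)

From HB Require Import structures.
From mathcomp Require Import all_boot all_order all_algebra.
From mathcomp Require Import all_classical all_reals all_analysis.
From mathcomp Require Import lra.
Set Implicit Arguments. Unset Strict Implicit. Unset Printing Implicit Defensive.
Import Order.TTheory GRing.Theory Num.Theory.
Import numFieldNormedType.Exports.
Local Open Scope classical_set_scope.
Local Open Scope ring_scope.

Section LinearCombinations.
Variables (R : pzRingType) (V : lmodType R).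

Lemma combination_reindex n p (vs : 'I_n -> V) (ws : 'I_p -> V)
    (f : 'I_n -> 'I_p) (a : 'I_n -> R) :
  (forall j, a j != 0 -> ws (f j) = vs j) ->
  \sum_k (\sum_(j | f j == k) a j) = \sum_j a j /\
  \sum_k (\sum_(j | f j == k) a j) *: ws k = \sum_j a j *: vs j.
Proof.
move=> agree; split; first by rewrite [RHS](partition_big f xpredT).
rewrite [RHS](partition_big f xpredT) //=; apply: eq_bigr => k _.
rewrite scaler_suml; apply: eq_bigr => j /eqP <-.
by have [->|/agree ->] := eqVneq (a j) 0; rewrite ?scale0r.
Qed.

Lemma combination_compose n p (us : 'I_n -> V) (vs : 'I_p -> V)
    (al : 'I_n -> 'I_p -> R) (rho : 'I_n -> R) :
  (forall i, us i = \sum_j al i j *: vs j) ->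
  \sum_i rho i *: us i = \sum_j (\sum_i rho i * al i j) *: vs j.
Proof.
move=> usE; under eq_bigr do rewrite usE scaler_sumr.
rewrite exchange_big /=; apply: eq_bigr => j _; rewrite scaler_suml.
by apply: eq_bigr => i _; rewrite scalerA.
Qed.

Lemma combination_compose_sum n p (al : 'I_n -> 'I_p -> R) (rho : 'I_n -> R) :
  (forall i, \sum_j al i j = 1) -> \sum_i rho i = 1 ->
  \sum_j (\sum_i rho i * al i j) = 1.
Proof.
move=> al1 rho1; rewrite exchange_big /= -[RHS]rho1; apply: eq_bigr => i _.
by rewrite -mulr_sumr al1 mulr1.
Qed.

End LinearCombinations.
Arguments combination_reindex {R V n p} vs ws f a.

Lemma sum1_nonzero (R : nzRingType) n (a : 'I_n -> R) :
  \sum_i a i = 1 -> exists i, a i != 0.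
Proof.
move=> a1; have [//|allz] := pselect (exists i, a i != 0).
move: a1; rewrite big1; first by move/eqP; rewrite eq_sym oner_eq0.
by move=> i _; apply/eqP/negPn/negP => ai; apply: allz; exists i.
Qed.

Lemma sum1_le1 (R : numDomainType) n (a : 'I_n -> R) :
  (forall i, 0 <= a i) -> \sum_i a i = 1 -> forall i, a i <= 1.
Proof. by move=> a0 a1 i; rewrite -a1 (bigD1 i) //= lerDl sumr_ge0. Qed.

Section SegmentsAndPaths.
Variable R : realType.

Lemma segment_start_near (V : normedModType R) (x z : V) (e : R) : 0 < e ->
  exists2 r : R, 0 < r <= 1 & ball x e ((1 - r) *: x + r *: z).
Proof.
move=> e_gt0; pose N := `|x - z|; have N_ge0 : 0 <= N := normr_ge0 _.
have eN_gt0 : 0 < e + N by lra.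
pose r := e / (e + N); have r_gt0 : 0 < r by apply: divr_gt0.
have rE : r * (e + N) = e by rewrite /r divfK // gt_eqF.
exists r; first by rewrite r_gt0 ler_pdivrMr // mul1r lerDl.
rewrite -ball_normE /ball_ /=.
have -> : x - ((1 - r) *: x + r *: z) = r *: (x - z).
  by rewrite scalerBl scale1r scalerBr opprD opprB addrA [x + (_ - x)]addrC subrK.
by rewrite normrZ ger0_norm ?ltW // -/N; nra.
Qed.

Lemma path_enters_open (T : topologicalType) (pi : R -> T) (U : set T) :
  {within `[0, 1], continuous pi} -> open U -> U (pi 0) ->
  exists t0, 0 < t0 < 1 /\ U (pi t0).
Proof.
move=> pi_cont U_open U_pi0.
have zero01 : (0:R) \in `[0, 1] by rewrite in_itv /= lexx ler01.
have U_nbhs : nbhs (pi 0) U by apply: open_nbhs_nbhs.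
have := (subspace_continuousP `[(0:R), 1]%classic pi).1 pi_cont 0 zero01 _ U_nbhs.
rewrite /within /= => /nbhs_ballP[e /= e_gt0 near0].
pose t0 := Num.min (e / 2) (2^-1).
have t0_gt0 : 0 < t0 by rewrite lt_min; apply/andP; split; lra.
have t0_lt1 : t0 < 1 by rewrite gt_min; apply/orP; right; lra.
have t0_lte : t0 < e by rewrite gt_min; apply/orP; left; lra.
exists t0; split; first by rewrite t0_gt0 t0_lt1.
apply: near0; last by rewrite in_itv /= !ltW.
by rewrite -ball_normE /ball_ /= sub0r normrN gtr0_norm.
Qed.

Lemma segment_prefix_continuous (V : normedModType R) (pi : R -> V) (y : V) t0 :
  0 < t0 < 1 -> {within `[0, 1], continuous pi} ->
  {within `[0, 1], continuous
     (fun s => if s <= t0 then (1 - s / t0) *: y + (s / t0) *: pi t0 else pi s)}.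
Proof.
move=> /andP[t0_gt0 t0_lt1] pi_cont.
set seg := fun s => (1 - s / t0) *: y + (s / t0) *: pi t0.
have -> : `[(0:R), 1]%classic = `[0, t0]%classic `|` `[t0, 1]%classic.
  apply/seteqP; split => s; rewrite /= !in_itv /=.
    by move=> /andP[s0 s1]; case: (leP s t0) => st; [left|right]; apply/andP; lra.
  by case => /andP[? ?]; apply/andP; lra.
apply: withinU_continuous; [exact: interval_closed|exact: interval_closed| |].
- apply: (@subspace_eq_continuous _ _ _ seg).
    by move=> s; rewrite inE /= in_itv /= => /andP[_ st]; rewrite /from_subspace /= st.
  apply: continuous_subspaceT => s.
  have ratio := @continuousM R R id (cst t0^-1) s cvg_id (@cst_continuous _ _ _ s).
  have co_ratio := @continuousB R R R (cst 1) _ s (@cst_continuous _ _ _ s) ratio.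
  have left := @continuousZr_tmp R V R (fun s => 1 - s / t0) y s co_ratio.
  have right := @continuousZr_tmp R V R (fun s => s / t0) (pi t0) s ratio.
  exact: (@continuousD R V R _ _ s left right).
- apply: (@subspace_eq_continuous _ _ _ pi).
    move=> s; rewrite inE /= in_itv /= => /andP[t0s _]; rewrite /from_subspace /=.
    case: leP => // st; have -> : s = t0 by apply/eqP; rewrite eq_le st t0s.
    by rewrite /seg divff ?gt_eqF // subrr scale0r scale1r add0r.
  apply: continuous_subspaceW pi_cont => s; rewrite /= !in_itv /= => /andP[t0s ->].
  by rewrite andbT (le_trans (ltW t0_gt0)).
Qed.

End SegmentsAndPaths.

Section Simplexes.
Variables (R : realType) (m : nat).
Local Notation pt := 'rV[R]_m.

Lemma open_conv_conv (vs : seq pt) : open_conv vs `<=` conv vs.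
Proof.
by move=> x [l [l01 [l1 ->]]]; exists l; split=> // i; case/andP: (l01 i) => /ltW.
Qed.

Lemma relint_sub (s : set pt) : relint s `<=` s.
Proof. by move=> x [vs [_ -> /open_conv_conv]]. Qed.

Lemma conv_vertex (vs : seq pt) (i : 'I_(size vs)) : conv vs vs`_i.
Proof.
exists (fun k => (k == i)%:R); split; first by move=> k; rewrite ler0n.
split; rewrite (bigD1 i) //= eqxx ?scale1r big1 ?addr0 // => k /negbTE ->;
  by rewrite ?scale0r.
Qed.

Lemma aff_indep_coord_uniq (vs : seq pt) (a b : 'I_(size vs) -> R) :
  aff_indep vs -> \sum_i a i = 1 -> \sum_i b i = 1 ->
  \sum_i a i *: vs`_i = \sum_i b i *: vs`_i -> forall i, a i = b i.
Proof.
move=> ivs a1 b1 ab i; apply/eqP; rewrite -subr_eq0; apply/eqP.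
apply: (ivs (fun i => a i - b i)); first by rewrite sumrB a1 b1 subrr.
under eq_bigr do rewrite scalerBl.
by rewrite sumrB ab subrr.
Qed.

Lemma aff_indep_inj (vs ws : seq pt) (h : 'I_(size ws) -> 'I_(size vs)) :
  injective h -> (forall k : 'I_(size ws), ws`_k = vs`_(h k)) ->
  aff_indep vs -> aff_indep ws.
Proof.
move=> h_inj wsE ivs l l0 l1 k.
have [s1 s2] := combination_reindex (fun k : 'I_(size ws) => ws`_k)
  (fun j : 'I_(size vs) => vs`_j) h l (fun k _ => esym (wsE k)).
have := ivs (fun j => \sum_(k' | h k' == j) l k') (etrans s1 l0) (etrans s2 l1).
move=> /(_ (h k)).
by rewrite (big_pred1 k) // => k'; apply/eqP/eqP => [/h_inj|->].
Qed.

Lemma conv_subset_coords (vs ws : seq pt) x : {subset ws <= vs} -> conv ws x ->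
  exists b : 'I_(size vs) -> R, [/\ forall j, 0 <= b j, \sum_j b j = 1,
     x = \sum_j b j *: vs`_j & forall j, b j != 0 -> vs`_j \in ws].
Proof.
move=> wsv [a [a0 [a1 ->]]].
have vs_ws (k : 'I_(size ws)) : ws`_k \in vs by apply: wsv; exact: mem_nth.
pose f k := Ordinal (etrans (index_mem _ _) (vs_ws k)).
have fE k : vs`_(f k) = ws`_k by rewrite /= nth_index.
have [s1 s2] := combination_reindex (fun k : 'I_(size ws) => ws`_k)
  (fun j : 'I_(size vs) => vs`_j) f a (fun k _ => fE k).
exists (fun j => \sum_(k | f k == j) a k); split => //.
- by move=> j; apply: sumr_ge0.
- by rewrite s1.
- move=> j; apply: contraR => vj_ws; rewrite big1 // => k /eqP fkj.
  by move: vj_ws; rewrite -fkj fE mem_nth.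
Qed.

Lemma conv_supported_coords (vs ws : seq pt) (b : 'I_(size vs) -> R) :
  (forall j, 0 <= b j) -> \sum_j b j = 1 -> (forall j, b j != 0 -> vs`_j \in ws) ->
  conv ws (\sum_j b j *: vs`_j).
Proof.
move=> b0 b1 b_ws; have [j0 /b_ws vj0_ws] := sum1_nonzero b1.
have ws_gt0 : (0 < size ws)%N by case: (ws) vj0_ws.
pose g (j : 'I_(size vs)) := insubd (Ordinal ws_gt0) (index vs`_j ws).
have gE j : b j != 0 -> ws`_(g j) = vs`_j.
  by move=> /b_ws vj; rewrite /g /= insubdK ?nth_index // -topredE /= index_mem.
have [s1 s2] := combination_reindex (fun j : 'I_(size vs) => vs`_j)
  (fun k : 'I_(size ws) => ws`_k) g b gE.
exists (fun k => \sum_(j | g j == k) b j); split; last by rewrite s1 s2.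
by move=> k; apply: sumr_ge0.
Qed.

Lemma conv_sub_conv (us ws : seq pt) :
  (forall i : 'I_(size us), conv ws us`_i) -> conv us `<=` conv ws.
Proof.
move=> us_ws; have /choice[al alP] : forall i : 'I_(size us),
    exists al : 'I_(size ws) -> R, (forall j, 0 <= al j) /\ \sum_j al j = 1 /\
      us`_i = \sum_j al j *: ws`_j by move=> i; exact: us_ws.
move=> w [rho [rho0 [rho1 ->]]].
exists (fun j => \sum_i rho i * al i j); split.
  by move=> j; apply: sumr_ge0 => i _; apply: mulr_ge0 => //; case: (alP i).
split; first by apply: combination_compose_sum => // i; case: (alP i) => _ [].
by apply: combination_compose => i; case: (alP i) => _ [].
Qed.

(** Every point of a simplex lies in the open hull of some of its vertices
    (those carrying a positive coordinate). *)
Lemma open_support (vs : seq pt) z : aff_indep vs -> conv vs z ->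
  exists ws, [/\ {subset ws <= vs}, aff_indep ws & open_conv ws z].
Proof.
move=> ivs [a [a0 [a1 zE]]].
have [j0 _] := sum1_nonzero a1.
pose sel := [seq j <- enum 'I_(size vs) | 0 < a j].
pose ws := map (fun j : 'I_(size vs) => vs`_j) sel.
pose h (k : 'I_(size ws)) := nth j0 sel k.
have size_ws : size ws = size sel by rewrite size_map.
have h_sel (k : 'I_(size ws)) : (k < size sel)%N by rewrite -size_ws.
have wsE (k : 'I_(size ws)) : ws`_k = vs`_(h k) by rewrite (nth_map j0).
have h_inj : injective h.
  have uniq_sel : uniq sel by rewrite filter_uniq ?enum_uniq.
  by move=> k1 k2 /eqP; rewrite /h nth_uniq ?h_sel // => /eqP/val_inj.
have a_h (k : 'I_(size ws)) : 0 < a (h k).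
  by have := mem_nth j0 (h_sel k); rewrite mem_filter => /andP[].
have fiber j : \sum_(k | h k == j) a (h k) = a j.
  have [aj_gt0|] := ltrP 0 (a j); last first.
    move=> aj_le0; have -> : a j = 0 by apply/eqP; rewrite eq_le aj_le0 a0.
    by rewrite big1 // => k /eqP hk; move: (a_h k); rewrite hk ltNge aj_le0.
  have j_sel : j \in sel by rewrite mem_filter aj_gt0 mem_enum.
  have jk : (index j sel < size ws)%N by rewrite size_map index_mem.
  have hk : h (Ordinal jk) = j by rewrite /h /= nth_index.
  by rewrite -hk (big_pred1 (Ordinal jk)) // => k; apply/eqP/eqP => [/h_inj|->].
exists ws; split.
- by move=> v /mapP[j _ ->]; exact: mem_nth.
- exact: aff_indep_inj h_inj wsE ivs.
have [s1 s2] := combination_reindex (fun k : 'I_(size ws) => ws`_k)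
  (fun j : 'I_(size vs) => vs`_j) h (fun k => a (h k)) (fun k _ => esym (wsE k)).
exists (fun k => a (h k)); split; first by move=> k; rewrite a_h sum1_le1.
by split; [rewrite -a1 -s1 | rewrite zE -s2]; apply: eq_bigr => j _; rewrite fiber.
Qed.

Lemma relint_segment (s : set pt) a b t : relint s b -> s a -> 0 < t <= 1 ->
  relint s ((1 - t) *: a + t *: b).
Proof.
move=> [vs [ivs sE [l [l01 [l1 bE]]]]] sa /andP[t_gt0 t_le1].
have [c [c0 [c1 aE]]] : conv vs a by rewrite -sE.
pose d i := (1 - t) * c i + t * l i.
have d_gt0 i : 0 < d i.
  have t'_ge0 : 0 <= 1 - t by rewrite subr_ge0.
  have := mulr_ge0 t'_ge0 (c0 i).
  have := mulr_gt0 t_gt0 (proj1 (andP (l01 i))); rewrite /d; lra.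
have d1 : \sum_i d i = 1 by rewrite big_split /= -!mulr_sumr c1 l1 !mulr1 subrK.
exists vs; split => //; exists d; split.
  by move=> i; rewrite d_gt0 sum1_le1 // => j; exact: ltW.
split => //; rewrite aE bE !scaler_sumr -big_split /=.
by apply: eq_bigr => i _; rewrite /d !scalerA scalerDl.
Qed.

(** Convex hulls of finitely many points are closed: they are continuous
    images of the compact standard simplex. *)
Lemma conv_closed (vs : seq pt) : closed (conv vs).
Proof.
pose n := size vs.
pose D := [set l : 'rV[R]_n | forall i, l ord0 i \in `[(0:R), 1]] `&`
          [set l : 'rV[R]_n | \sum_i l ord0 i = 1].
have sum_cont : continuous (fun l : 'rV[R]_n => \sum_i l ord0 i).
  apply: continuous_big; first exact: add_continuous.
  by move=> i _; exact: coord_continuous.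
have D_compact : compact D.
  apply: compact_closedI.
    apply: (@rV_compact _ _ (fun=> `[(0:R), 1]%classic)) => _.
    exact: segment_compact.
  exact: (closed_comp (fun l _ => sum_cont l) (closed_eq (y:=1))).
pose g (l : 'rV[R]_n) := \sum_i l ord0 i *: vs`_i.
have -> : conv vs = g @` D.
  apply/seteqP; split => x.
    move=> [a [a0 [a1 ->]]]; exists (\row_i a i); last first.
      by rewrite /g; apply: eq_bigr => i _; rewrite mxE.
    split => /=; last by under eq_bigr do rewrite mxE.
    by move=> i; rewrite mxE in_itv /= a0 sum1_le1.
  move=> [l [l01 l1] <-]; exists (fun i => l ord0 i); split => //.
  by move=> i; have := l01 i; rewrite in_itv /= => /andP[].
apply: compact_closed; first exact: norm_hausdorff.
apply: continuous_compact => //; apply: continuous_subspaceT.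
apply: continuous_big; first exact: add_continuous.
by move=> i _ l; apply: continuousZr_tmp; exact: coord_continuous.
Qed.

(** Barycentric coordinates in [vs] are unique, so the coordinates of
    [z], positive combinations of those of the vertices [us], vanish outside
    [ws] only if all vertices [us] lie in [conv ws]. *)
Lemma open_conv_in_face (us vs ws : seq pt) z :
  aff_indep vs -> {subset ws <= vs} -> conv us = conv vs ->
  open_conv us z -> conv ws z -> conv us `<=` conv ws.
Proof.
move=> ivs ws_vs usE [lam [lam01 [lam1 zE]]] z_ws; apply: conv_sub_conv.
have /choice[al alP] : forall i : 'I_(size us),
    exists al : 'I_(size vs) -> R, (forall j, 0 <= al j) /\ \sum_j al j = 1 /\
      us`_i = \sum_j al j *: vs`_j.
  by move=> i; have : conv vs us`_i by rewrite -usE; exact: conv_vertex.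
have al0 (i : 'I_(size us)) j : 0 <= al i j by case: (alP i).
have al1 (i : 'I_(size us)) : \sum_j al i j = 1 by case: (alP i) => _ [].
have alE (i : 'I_(size us)) : us`_i = \sum_j al i j *: vs`_j by case: (alP i) => _ [].
have [be [_ be1 zbe be_ws]] := conv_subset_coords ws_vs z_ws.
have coordE := aff_indep_coord_uniq ivs (combination_compose_sum al1 lam1) be1
  (etrans (esym (etrans zE (combination_compose lam alE))) zbe).
have al_ws (i : 'I_(size us)) (j : 'I_(size vs)) : al i j != 0 -> vs`_j \in ws.
  apply: contraR => vj_ws; have be_j : be j = 0.
    by apply/eqP; apply: contraR vj_ws => /be_ws.
  have lam_al_ge0 k : xpredT k -> 0 <= lam k * al k j.
    by move=> _; apply: mulr_ge0 => //; case/andP: (lam01 k) => /ltW.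
  have /eqP := psumr_eq0P lam_al_ge0 (etrans (coordE j) be_j) (i := i) isT.
  by rewrite mulf_eq0 gt_eqF /=; [|case/andP: (lam01 i)].
by move=> i; rewrite alE; exact: conv_supported_coords (al0 i) (al1 i) (al_ws i).
Qed.

End Simplexes.

Section Complex.
Variables (R : realType) (m : nat) (K : set (set 'rV[R]_m)).
Hypothesis K_complex : simplicial_complex K.
Local Notation pt := 'rV[R]_m.
Local Notation P := (polyhedron K).

Lemma relint_polyhedron t x : K t -> relint t x -> P x.
Proof. by move=> Kt /relint_sub tx; exists t. Qed.

(** A simplex of [K] whose relative interior meets another simplex [t'] of
    [K] is contained in [t']: their intersection is a face of [t] meeting the
    relative interior of [t]. *)
Lemma relint_meet_sub t t' z : K t -> K t' -> relint t z -> t' z -> t `<=` t'.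
Proof.
move=> Kt Kt' [us [_ tE z_us]] t'z; have [_ _ _ meet_face] := K_complex.
have [[vs [ws [ivs tvs ws_vs tws]]] _] := meet_face _ _ Kt Kt'.
have z_ws : conv ws z by rewrite -tws; split => //; rewrite tE; exact: open_conv_conv.
have us_ws := open_conv_in_face ivs ws_vs (etrans (esym tE) tvs) z_us z_ws.
by rewrite tE => w /us_ws; rewrite -tws => -[].
Qed.

Lemma relint_inj t t' z : K t -> K t' -> relint t z -> relint t' z -> t = t'.
Proof.
move=> Kt Kt' rz r'z; apply/seteqP; split.
  exact: relint_meet_sub Kt Kt' rz (relint_sub r'z).
exact: relint_meet_sub Kt' Kt r'z (relint_sub rz).
Qed.

(** Every point of [|K|] lies in the relative interior of a simplex of [K]
    (a face of any simplex containing it). *)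
Lemma carrier_exists z : P z -> exists t, K t /\ relint t z.
Proof.
move=> [s Ks sz]; have [_ simplexes faces _] := K_complex.
have [vs [ivs sE]] := simplexes _ Ks.
have vs_z : conv vs z by rewrite -sE.
have [ws [ws_vs iws z_ws]] := open_support ivs vs_z.
exists (conv ws); split; last by exists ws.
by apply: faces Ks _; exists vs, ws.
Qed.

(** The open star of [x]: the complement of the simplexes of [K] missing [x].
    It is an open neighbourhood of [x], as [K] is a finite family of closed
    sets. *)
Definition open_star (x : pt) : set pt :=
  ~` \bigcup_(t in [set t | K t /\ ~ t x]) t.

Lemma open_star_open x : open (open_star x).
Proof.
have [K_finite simplexes _ _] := K_complex.
apply: closed_openC; apply: closed_bigcup.
  by apply: sub_finite_set K_finite => t [].
by move=> t [Kt _]; have [vs [_ ->]] := simplexes _ Kt; exact: conv_closed.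
Qed.

Lemma open_star_self x : open_star x x.
Proof. by move=> [t [_ not_tx] tx]. Qed.

Lemma open_star_carrier x z : open_star x z -> P z ->
  exists t, [/\ K t, relint t z & t x].
Proof.
move=> star_z Pz; have [t [Kt rz]] := carrier_exists Pz.
exists t; split => //; apply: contrapT => not_tx.
by apply: star_z; exists t => //; exact: relint_sub rz.
Qed.

Definition cell_invariant (S : set pt) : Prop :=
  forall t, K t -> forall x y, relint t x -> relint t y -> S x -> S y.

Lemma union_of_cells_invariant S : union_of_cells K S -> cell_invariant S.
Proof.
move=> [F [F_cells ->]] t Kt x y rx ry [C FC Cx]; exists C => //.
have [t' [Kt' _ CE]] := F_cells _ FC; rewrite CE in Cx *.
by rewrite (relint_inj Kt' Kt Cx rx).
Qed.

Lemma union_of_cells_sub S : union_of_cells K S -> S `<=` P.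
Proof.
move=> [F [F_cells ->]] z [C FC Cz]; have [t [Kt _ CE]] := F_cells _ FC.
by rewrite CE in Cz; exact: relint_polyhedron Kt Cz.
Qed.

Lemma cell_invariant_cells S : cell_invariant S -> S `<=` P ->
  exists F : set (set pt),
    [/\ finite_set F, (forall C, F C -> is_cell K C) & S = \bigcup_(C in F) C].
Proof.
move=> S_inv S_P; exists [set C | is_cell K C /\ C `<=` S]; split.
- have [K_finite _ _ _] := K_complex.
  apply: (sub_finite_set _ (finite_image (@relint R m) K_finite)).
  by move=> C [[t [Kt _ ->]] _]; exists t.
- by move=> C [].
apply/seteqP; split => [z Sz|z [C [_ CS] Cz]]; last exact: CS.
have [t [Kt rz]] := carrier_exists (S_P _ Sz).
exists (relint t); last exact: rz.
split; first by exists t; split => //; exists z; exact: relint_sub rz.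
by move=> w rw; exact: S_inv Kt z w rz rw Sz.
Qed.

(** The interior (in [|K|]) of a cell-invariant set is cell-invariant: if [x]
    has a ball in [S], every point [z] of the open star of [y] is in [S],
    because its carrier contains [x] and points of that carrier's relative
    interior come arbitrarily close to [x]. *)
Lemma interior_invariant S : cell_invariant S -> cell_invariant (sub_interior K S).
Proof.
move=> S_inv t Kt x y rx ry [_ [U [U_open Ux US]]].
split; first exact: relint_polyhedron Kt ry.
exists (open_star y); split; [exact: open_star_open|exact: open_star_self|].
move=> z [star_z Pz]; have [tz [Ktz rz tz_y]] := open_star_carrier star_z Pz.
have tz_x : tz x := relint_meet_sub Kt Ktz ry tz_y (relint_sub rx).
have /nbhs_ballP[e /= e_gt0 ball_U] : nbhs x U by apply: open_nbhs_nbhs.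
have [r r01 w_near] := segment_start_near x z e_gt0.
have w_relint := relint_segment rz tz_x r01.
have Sw : S ((1 - r) *: x + r *: z).
  by apply: US; split; [exact: ball_U|exact: relint_polyhedron Ktz w_relint].
exact: S_inv Ktz _ _ w_relint rz Sw.
Qed.

(** The points reaching [Sg] through [Sf] form a cell-invariant set when [Sf]
    is cell-invariant: a path from [x] enters the open star of [x] at some
    time [t0]; the carrier of [pi t0] contains [x], hence [y], so the part of
    the path before [t0] can be replaced by a segment from [y] that runs in
    the relative interior of that carrier. *)
Lemma reach_invariant (Sf Sg : set pt) : cell_invariant Sf ->
  cell_invariant [set x | P x /\ exists pi : R -> pt,
    [/\ path_in K pi, pi 0 = x, (forall s, s \in `]0, 1[ -> Sf (pi s)) & Sg (pi 1)]].
Proof.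
move=> Sf_inv t Kt x y rx ry [_ [pi [[pi_cont pi_P] pi0 pi_f pi_g]]].
split; first exact: relint_polyhedron Kt ry.
have star_pi0 : open_star x (pi 0) by rewrite pi0; exact: open_star_self.
have [t0 [t0_range star_t0]] := path_enters_open pi_cont (@open_star_open x) star_pi0.
have /andP[t0_gt0 t0_lt1] := t0_range.
have t0_01 : t0 \in `[0, 1] by rewrite in_itv /= !ltW.
have [tz [Ktz rz tz_x]] := open_star_carrier star_t0 (pi_P _ t0_01).
have tz_y : tz y := relint_meet_sub Kt Ktz rx tz_x (relint_sub ry).
pose seg (s : R) : pt := (1 - s / t0) *: y + (s / t0) *: pi t0.
have seg_relint s : 0 < s <= t0 -> relint tz (seg s).
  move=> /andP[s_gt0 s_le]; apply: relint_segment rz tz_y _.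
  by rewrite divr_gt0 //= ler_pdivrMr // mul1r.
have seg0 : seg 0 = y by rewrite /seg mul0r subr0 scale1r scale0r addr0.
exists (fun s => if s <= t0 then seg s else pi s); split.
- split; first exact: segment_prefix_continuous t0_range pi_cont.
  move=> s; rewrite in_itv /= => /andP[s_ge0 s_le1]; case: leP => s_t0.
    have [->|s_neq0] := eqVneq s 0.
      by rewrite seg0; exact: relint_polyhedron Kt ry.
    apply: relint_polyhedron Ktz (seg_relint s _).
    by rewrite lt_neqAle eq_sym s_neq0 s_ge0.
  by apply: pi_P; rewrite in_itv /= s_ge0.
- by rewrite ltW.
- move=> s; rewrite in_itv /= => /andP[s_gt0 s_lt1]; case: leP => s_t0.
    apply: Sf_inv Ktz _ _ rz (seg_relint s _) (pi_f _ _); first by rewrite s_gt0.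
    by rewrite in_itv /= t0_gt0.
  by apply: pi_f; rewrite in_itv /= s_gt0.
- by case: leP => // /(lt_le_trans t0_lt1); rewrite ltxx.
Qed.

Lemma sat_cell_invariant (AP : finType) (V : AP -> set pt) :
  (forall p, union_of_cells K (V p)) ->
  forall phi, cell_invariant (sat K V phi) /\ sat K V phi `<=` P.
Proof.
move=> V_cells.
elim=> [|p|f [f_inv _]|f [f_inv f_P] g [g_inv _]|f [f_inv _]|f [f_inv _] g _] /=.
- by split=> // t Kt x y _ ry _; exact: relint_polyhedron Kt ry.
- by split; [exact: union_of_cells_invariant|exact: union_of_cells_sub].
- split=> [t Kt x y rx ry [_ not_fx]|z []//].
  split; first exact: relint_polyhedron Kt ry.
  by move=> fy; apply: not_fx; exact: f_inv Kt _ _ ry rx fy.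
- split=> [t Kt x y rx ry [fx gx]|z [/f_P]//].
  by split; [exact: f_inv Kt _ _ rx ry fx|exact: g_inv Kt _ _ rx ry gx].
- by split; [exact: interior_invariant|move=> z []].
- by split; [exact: reach_invariant|move=> z []].
Qed.

End Complex.

Theorem mainTheorem2 (R : realType) (m : nat) (AP : finType)
    (K : set (set 'rV[R]_m)) (V : AP -> set 'rV[R]_m) :
  polyhedral_model K V ->
  (forall (C : set 'rV[R]_m) (x y : 'rV[R]_m), is_cell K C -> C x -> C y ->
     forall phi : slcs AP, sat K V phi x <-> sat K V phi y) /\
  (forall phi : slcs AP, exists F : set (set 'rV[R]_m),
     [/\ finite_set F, (forall C, F C -> is_cell K C) &
         sat K V phi = \bigcup_(C in F) C]).
Proof.
move=> [K_complex V_cells]; have sat_inv := sat_cell_invariant K_complex V_cells.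
split=> [C x y [t [Kt _ ->]] rx ry phi|phi]; have [phi_inv phi_P] := sat_inv phi.
  by split; [exact: phi_inv Kt x y rx ry|exact: phi_inv Kt y x ry rx].
exact: cell_invariant_cells phi_inv phi_P.
Qed.
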